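(* Let $p,q$ be positive integers with $p/q\ge 2$. If $I$ is an independent set of the Kneser graph $K_{p/q}$, then $|N(I)|\ge \frac{p-q}{q}\,|I|$, where $N(I)$ is the set of vertices adjacent to at least one vertex of $I$.
   Context: For integers $1\le q\le p$, the Kneser graph $K_{p/q}$ has as vertices all $q$-element subsets of $[p]=\{1,\dots,p\}$, two being adjacent iff they are disjoint. *)

From HB Require Import structures.
From mathcomp Require Import all_boot all_order all_algebra.
Set Implicit Arguments. Unset Strict Implicit. Unset Printing Implicit Defensive.

(* Vertices of the Kneser graph K_{p/q}: q-element subsets of [p], modelled as
   subsets of 'I_p (the elements 0..p-1 stand for 1..p). *)
Definition kneser_vertex (p q : nat) (A : {set 'I_p}) : bool := #|A| == q.

Definition kneser_adj (p : nat) (A B : {set 'I_p}) : bool := [disjoint A & B].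

Definition kneser_independent (p q : nat) (I : {set {set 'I_p}}) : bool :=
  [forall A in I, kneser_vertex q A] &&
  [forall A in I, forall B in I, ~~ kneser_adj A B].

Definition kneser_nbhd (p q : nat) (I : {set {set 'I_p}}) : {set {set 'I_p}} :=
  [set B | kneser_vertex q B & [exists A in I, kneser_adj A B]].

From HB Require Import structures.
From mathcomp Require Import all_boot all_order all_algebra all_fingroup.
From mathcomp Require Import zify.
Import Order.TTheory GRing.Theory Num.Theory.

(* Katona's cycle method.  Write p = n.+1 and identify [p] with 'Z_p.  For a
   permutation s of [p], the p "arcs" s(i + {0,..,q-1}) (i in 'Z_p) are
   q-subsets of [p].  Fix s and let K (resp. M) be the set of indices i whose
   arc lies in I (resp. in N(I)).  The arcs i + q + j, 0 <= j <= p - 2q, are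
   disjoint from arc i, so M contains the interval sumset K + q + [0, p-2q];
   an elementary growth bound for such sumsets in 'Z_p, together with the
   disjointness of K and M, yields the local inequality (p-q)|K| <= q|M|.
   Summing over all s, every q-set B is the i-th arc for the same number g of
   permutations (the symmetric group is transitive on q-sets), so the two sums
   equal p g |I| and p g |N(I)|, and the theorem follows by cancelling p g. *)

Section PermutationsOnSets.
Variable T : finType.

(* The symmetric group acts transitively on the subsets of a given size:
   induction on #|X :\: Y|, swapping a point of X :\: Y with one of Y :\: X. *)
Lemma perm_transitive_sets (X Y : {set T}) :
  #|X| = #|Y| -> exists s : {perm T}, s @: X = Y.
Proof.
move: {2}#|X :\: Y| (leqnn #|X :\: Y|) => k.
elim: k X => [|k IH] X hk hXY.
  have sXY : X \subset Y by rewrite -setD_eq0 -cards_eq0 -leqn0.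
  have -> : X = Y by apply/eqP; rewrite eqEcard sXY hXY leqnn.
  by exists 1%g; rewrite imset_perm1.
have [XY0|[x hx]] := set_0Vmem (X :\: Y); first by apply: IH; rewrite ?XY0 ?cards0.
have : 0 < #|Y :\: X| by rewrite cardsD -hXY setIC -cardsD; apply/card_gt0P; exists x.
case/card_gt0P => y hy; move: hx hy; rewrite !inE => /andP [xY xX] /andP [yX yY].
pose X' := tperm x y @: X.
have cX' : #|X'| = #|Y| by rewrite card_imset ?hXY //; apply: perm_inj.
(* Swapping x and y removes x from the difference and adds nothing to it. *)
have sub : X' :\: Y \subset (X :\: Y) :\ x.
  apply/subsetP => z; rewrite !inE => /andP [zY /imsetP [w wX zw]]; subst z.
  move: zY; case: tpermP => [wx|wy|wx wy].
  - by rewrite yY.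
  - by move: wX; rewrite wy (negbTE yX).
  - by move=> wY; rewrite wY wX !andbT; apply/eqP.
have [s hs] : exists s : {perm T}, s @: X' = Y.
  apply: IH => //; have := subset_leq_card sub; have := cardsD1 x (X :\: Y).
  by rewrite !inE xY xX /=; lia.
exists (tperm x y * s)%g; rewrite -hs -imset_comp.
by apply: eq_imset => z; rewrite permM.
Qed.

Lemma card_perm_sending (A : {set T}) {X B : {set T}} : #|X| = #|A| -> #|B| = #|A| ->
  #|[set s : {perm T} | s @: X == B]| = #|[set s : {perm T} | s @: A == A]|.
Proof.
move=> hX hB.
have [t ht] := perm_transitive_sets _ _ (esym hX).
have [r hr] := perm_transitive_sets _ _ (esym hB).
pose f (s : {perm T}) := (t^-1 * s * r)%g.
have f_inj : injective f by move=> s1 s2 /mulIg /mulgI.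
rewrite -(card_preimset _ f_inj); apply: eq_card => s; rewrite !inE.
have -> : f s @: X = r @: (s @: A).
  by rewrite -ht -!imset_comp; apply: eq_imset => x /=; rewrite !permM permK.
apply/eqP/eqP => [h|->]; last by rewrite hr.
by apply: (imset_inj (@perm_inj _ r)); rewrite h hr.
Qed.

End PermutationsOnSets.

Section CyclicArcs.
Variables n q : nat.
Local Notation Zp := 'I_n.+1.
Hypothesis q_le_p : (q <= n.+1)%N.

Definition init_arc : {set Zp} := [set j : Zp | (j < q)%N].
Definition arc (i : Zp) : {set Zp} := [set (i + a)%R | a in init_arc].

Lemma card_init_arc : #|init_arc| = q.
Proof.
have -> : init_arc = [set widen_ord q_le_p k | k : 'I_q].
  apply/setP => j; rewrite inE; apply/idP/imsetP => [hj|[k _ ->]] //=.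
  by exists (Ordinal hj) => //; apply: val_inj.
by rewrite card_imset ?card_ord // => k1 k2 /(congr1 val) e; apply: val_inj.
Qed.

Lemma card_arc i : #|arc i| = q.
Proof. by rewrite card_imset ?card_init_arc //; apply: addrI. Qed.

Lemma arc_disjoint_shift (i : Zp) d : (q <= d)%N -> (d + q <= n.+1)%N ->
  [disjoint arc i & arc (i + inZp d)%R].
Proof.
move=> qd dq; rewrite disjoint_subset; apply/subsetP => x /imsetP [a ha ->].
rewrite inE; apply/negP => /imsetP [b hb].
rewrite -addrA => /addrI /(congr1 val) /=; move: ha hb; rewrite !inE => ha hb.
by rewrite (modn_small (m := d)) ?modn_small; lia.
Qed.

End CyclicArcs.

Arguments init_arc : clear implicits.
Arguments arc : clear implicits.

Section IntervalSumsets.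
Variable n : nat.
Local Notation Zp := 'I_n.+1.

Lemma inZpS j : (inZp j.+1 : Zp) = (inZp j + inZp 1)%R.
Proof. by apply: val_inj => /=; rewrite modnDm addn1. Qed.

Lemma inZp0 : (inZp 0 : Zp) = 0%R.
Proof. exact: val_inj. Qed.

(* shift_closure K t is the sumset K + {0, .., t} in 'Z_p, built by adding the
   unit shift of the previous stage t times. *)
Fixpoint shift_closure (K : {set Zp}) t : {set Zp} :=
  if t is t'.+1 then
    shift_closure K t' :|: [set (x + inZp 1)%R | x in shift_closure K t']
  else K.

Lemma shift_closure_sub (K : {set Zp}) t : K \subset shift_closure K t.
Proof. by elim: t => [|t IH] //=; apply: subset_trans IH (subsetUl _ _). Qed.

Lemma shift_closure_mem (K : {set Zp}) t x : x \in shift_closure K t ->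
  exists2 k, k \in K & exists2 j, (j <= t)%N & x = (k + inZp j)%R.
Proof.
elim: t x => [|t IH] x /=; first by exists x => //; exists 0%N; rewrite // inZp0 addr0.
case/setUP => [/IH [k hk [j hj ->]]|/imsetP [y /IH [k hk [j hj ->]] ->]].
  by exists k => //; exists j => //; lia.
by exists k => //; exists j.+1 => //; rewrite (inZpS j) addrA.
Qed.

Lemma shift_stable_full (S : {set Zp}) : S != set0 ->
  [set (x + inZp 1)%R | x in S] \subset S -> S = setT.
Proof.
case/set0Pn => s hs hsub.
have hj j : (s + inZp j)%R \in S.
  elim: j => [|j IH]; first by rewrite inZp0 addr0.
  by rewrite inZpS addrA; apply: (subsetP hsub); apply: imset_f.
by apply/setP => v; rewrite inE; have := hj (val (v - s)%R); rewrite valZpK addrC subrK.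
Qed.

(* Growth of interval sumsets: |K + {0, .., t}| >= min(p, |K| + t).  Each
   shift step either adds a new point or the set is already all of 'Z_p. *)
Lemma card_shift_closure (K : {set Zp}) t : K != set0 ->
  (minn n.+1 (#|K| + t) <= #|shift_closure K t|)%N.
Proof.
move=> K0; elim: t => [|t IH] /=; first by rewrite addn0 geq_minr.
set S := shift_closure K t.
have S0 : S != set0.
  by apply: contraNneq K0 => S_0; rewrite -subset0 -S_0 shift_closure_sub.
have [hsub|hsub] := boolP ([set (x + inZp 1)%R | x in S] \subset S).
  rewrite [in X in (_ <= X)%N](shift_stable_full _ S0 hsub) setTU cardsT card_ord.
  exact: geq_minl.
have := proper_card (properUl hsub); move: IH; rewrite -/S.
by set a := #|S|; set b := #|_ :|: _|; set k := #|K|; lia.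
Qed.

End IntervalSumsets.

Arguments shift_closure {n}.
Arguments card_shift_closure {n K}.

(* M contains (K + q) + {0, .., p - 2q} and is disjoint from K. *)
Lemma cyclic_local_bound n q (I : {set {set 'I_n.+1}}) (s : {perm 'I_n.+1}) :
  (0 < q)%N -> (2 * q <= n.+1)%N -> kneser_independent q I ->
  ((n.+1 - q) * #|[set i | s @: arc n q i \in I]|
    <= q * #|[set i | s @: arc n q i \in kneser_nbhd q I]|)%N.
Proof.
move=> q0 hq /andP [_ /forallP I_indep].
set K := [set i | _ \in I]; set M := [set i | _ \in kneser_nbhd q I].
have [->|K0] := eqVneq K set0; first by rewrite cards0 muln0.
set m := (n.+1 - 2 * q)%N.
set Kq := [set (k + inZp q)%R | k in K].
have card_Kq : #|Kq| = #|K| by rewrite card_imset //; apply: addIr.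
have Kq0 : Kq != set0 by rewrite -card_gt0 card_Kq card_gt0.
have sumset_in_M : shift_closure Kq m \subset M.
  apply/subsetP => x /shift_closure_mem [_ /imsetP [k hk ->] [j hj ->]].
  rewrite !inE /kneser_vertex card_imset ?card_arc ?eqxx /=; [|lia|exact: perm_inj].
  apply/existsP; exists (s @: arc n q k); rewrite inE in hk; rewrite hk /=.
  rewrite /kneser_adj imset_disjoint; last exact: perm_inj.
  have -> : (k + inZp q + inZp j)%R = (k + inZp (q + j))%R :> 'I_n.+1.
    by rewrite -addrA; congr (_ + _)%R; apply: val_inj => /=; rewrite modnDm.
  by apply: arc_disjoint_shift; lia.
have KM_disjoint : K :&: M = set0.
  apply/setP => i; rewrite !inE; apply/negP.
  case/andP => hi /andP [_ /existsP [A /andP [hA hadj]]].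
  by have := I_indep A; rewrite hA => /forallP /(_ (s @: arc n q i)); rewrite hi hadj.
have KM_le_p : (#|K| + #|M| <= n.+1)%N.
  by rewrite -cardsUI KM_disjoint cards0 addn0; have := max_card (K :|: M); rewrite card_ord.
have := card_shift_closure m Kq0; have := subset_leq_card sumset_in_M.
rewrite card_Kq; move: KM_le_p; set k := #|K|; set mm := #|M|.
move=> KM_le_p sumset_le_M sumset_large.
(* Since K is nonempty and disjoint from M, the sumset cannot be all of 'Z_p,
   so |M| >= |K| + m; then |K| + |M| <= p forces |K| <= q. *)
have k0 : (0 < k)%N by rewrite card_gt0.
have M_large : (k + m <= mm)%N by lia.
have K_small : (k <= q)%N by lia.
have := leq_mul (leqnn m) K_small; have -> : (n.+1 - q = q + m)%N by lia.
by nia.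
Qed.

Lemma card_setE (T : finType) (P : pred T) : #|[set x | P x]| = (\sum_x (P x : nat))%N.
Proof. by rewrite -sum1dep_card big_mkcond /=; apply: eq_bigr => x _; case: (P x). Qed.

Lemma sum_arcs_in_family n q (F : {set {set 'I_n.+1}}) : (q <= n.+1)%N ->
  (forall B, B \in F -> #|B| = q) ->
  (\sum_(s : {perm 'I_n.+1}) #|[set i | s @: arc n q i \in F]|)%N
   = (#|F| * (n.+1 * #|[set s : {perm 'I_n.+1} | s @: init_arc n q == init_arc n q]|))%N.
Proof.
move=> hq hF; set g := #|[set s : {perm 'I_n.+1} | _]|.
under eq_bigr do rewrite card_setE.
rewrite exchange_big /= (eq_bigr (fun _ => #|F| * g)%N).
  by rewrite sum_nat_const card_ord mulnCA mulnA [(#|F| * n.+1)%N]mulnC.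
move=> i _; rewrite -card_setE -sum1dep_card.
rewrite (partition_big (fun s : {perm 'I_n.+1} => s @: arc n q i) (mem F)) //=.
rewrite -[#|F|]sum1_card big_distrl /=; apply: eq_bigr => B hB; rewrite mul1n.
rewrite (eq_bigl (fun s : {perm 'I_n.+1} => s @: arc n q i == B)); last first.
  by move=> s; case: eqP => [->|_]; rewrite ?hB ?andbF ?andbT.
by rewrite sum1dep_card (card_perm_sending _ (init_arc n q)) ?card_arc ?card_init_arc ?hF.
Qed.

Lemma kneser_expansion_nat n q (I : {set {set 'I_n.+1}}) :
  (0 < q)%N -> (2 * q <= n.+1)%N -> kneser_independent q I ->
  ((n.+1 - q) * #|I| <= q * #|kneser_nbhd q I|)%N.
Proof.
move=> q0 hq hI; have hqn : (q <= n.+1)%N by lia.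
have I_size B : B \in I -> #|B| = q.
  by case/andP: hI => /forallP /(_ B) + _ hB; rewrite hB => /eqP.
have N_size B : B \in kneser_nbhd q I -> #|B| = q by rewrite inE => /andP [/eqP].
have := leq_sum (index_enum {perm 'I_n.+1})
  (fun s (_ : true) => @cyclic_local_bound n q I s q0 hq hI).
rewrite -!big_distrr /= !sum_arcs_in_family //.
set g := #|[set s : {perm 'I_n.+1} | _]|.
have g0 : (0 < g)%N by apply/card_gt0P; exists 1%g; rewrite inE imset_perm1.
by rewrite !mulnA !leq_pmul2r.
Qed.

Local Open Scope ring_scope.

Theorem mainTheorem7 (p q : nat) (I : {set {set 'I_p}}) :
  (0 < q)%N -> (0 < p)%N -> (2 <= p%:Q / q%:Q) ->
  kneser_independent q I ->
  ((p%:Q - q%:Q) / q%:Q) * #|I|%:Q <= #|kneser_nbhd q I|%:Q.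
Proof.
case: p I => [|n] I q0 // _ ratio hI.
have qQ : 0 < q%:Q by rewrite ltr0n.
rewrite ler_pdivlMr // -natrM ler_nat in ratio.
have := @kneser_expansion_nat n q I q0 ratio hI.
rewrite mulrAC ler_pdivrMr // -natrB; last by lia.
by rewrite -!natrM ler_nat [X in (_ <= X)%N]mulnC.
Qed.
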